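(* If $G$ is a 3-symmetric graph on $n\ge 3$ vertices, then $n\equiv 0,1,$ or $8 \pmod{16}$. In particular no 3-symmetric graph has $n$ vertices for $3\le n\le 7$.
   Context: All graphs are finite and simple. For a graph $G$ on $n$ vertices and a graph $H$ on $k$ vertices, the density $t(H,G)$ is the number of $k$-element subsets $S\subseteq V(G)$ whose induced subgraph $G[S]$ is isomorphic to $H$, divided by $\binom{n}{k}$. A graph $G$ with $n\ge 3$ vertices is 3-symmetric if $t(K_3,G)=1/8$, $t(P_3,G)=3/8$, $t(K_2\cup K_1,G)=3/8$ and $t(\overline{K_3},G)=1/8$, where $K_3$ is the triangle, $P_3$ is the path with 3 vertices and 2 edges, $K_2\cup K_1$ is the 3-vertex graph with exactly one edge, and $\overline{K_3}$ is the 3-vertex graph with no edges. *)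

From mathcomp Require Import all_boot all_order all_algebra.
Set Implicit Arguments. Unset Strict Implicit. Unset Printing Implicit Defensive.
Import GRing.Theory Num.Theory.

Definition simple_graph (n : nat) (e : rel 'I_n) : Prop :=
  (forall x, ~~ e x x) /\ (forall x y, e x y = e y x).

Definition induced_iso (n k : nat) (e : rel 'I_n) (h : rel 'I_k)
  (S : {set 'I_n}) : bool :=
  [exists f : {ffun 'I_k -> 'I_n},
     [&& injectiveb f, f @: setT == S & [forall i, forall j, e (f i) (f j) == h i j]]].

Definition density (n k : nat) (h : rel 'I_k) (e : rel 'I_n) : rat :=
  (#|[set S : {set 'I_n} | (#|S| == k) && induced_iso e h S]|)%:R / ('C(n, k))%:R.

Definition K3 : rel 'I_3 := fun i j => i != j.
Definition P3 : rel 'I_3 := fun i j =>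
  ((val i == 0%N) && (val j == 1%N)) || ((val i == 1%N) && (val j == 0%N)) ||
  ((val i == 1%N) && (val j == 2%N)) || ((val i == 2%N) && (val j == 1%N)).
Definition K2K1 : rel 'I_3 := fun i j =>
  ((val i == 0%N) && (val j == 1%N)) || ((val i == 1%N) && (val j == 0%N)).
Definition coK3 : rel 'I_3 := fun _ _ => false.

Definition three_symmetric (n : nat) (e : rel 'I_n) : Prop :=
  [/\ density K3 e = 1 / 8, density P3 e = 3 / 8,
      density K2K1 e = 3 / 8 & density coK3 e = 1 / 8]%R.

(* Count, over all 3-subsets S, the ordered pairs of adjacent vertices of S.
   Each ordered edge lies in n - 2 triples, so the total is 2|E|(n - 2); on the
   other hand a triangle, path, single edge and empty triple contribute 6, 4, 2
   and 0, so the densities 1/8, 3/8, 3/8, 1/8 make the total 3 C(n,3).  Hence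
   4|E| = n(n - 1), while 8 | C(n,3) gives 16 | n(n - 1)(n - 2); these two
   divisibilities leave only n = 0, 1, 8 (mod 16). *)

From mathcomp Require Import all_boot all_order all_algebra.
From mathcomp Require Import zify.
Set Implicit Arguments. Unset Strict Implicit. Unset Printing Implicit Defensive.
Import GRing.Theory Num.Theory.

Lemma modnM_congr d x1 x2 y1 y2 :
  x1 = x2 %[mod d] -> y1 = y2 %[mod d] -> x1 * y1 = x2 * y2 %[mod d].
Proof. by move=> Hx Hy; rewrite -modnMm Hx Hy modnMm. Qed.

Lemma mod16_of_dvd n :
  4 %| n * (n - 1) -> 16 %| n * (n - 1) * (n - 2) -> n %% 16 \in [:: 0; 1; 8].
Proof.
case: n => [|[|m]] //; rewrite !subSS !subn0.
have congS k : k + m = k + m %% 16 %[mod 16] by rewrite modnDmr.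
have cong2 : m.+2 * m.+1 = (m %% 16).+2 * (m %% 16).+1 %[mod 16].
  exact: modnM_congr (congS 2) (congS 1).
have cong3 : m.+2 * m.+1 * m = (m %% 16).+2 * (m %% 16).+1 * (m %% 16) %[mod 16].
  by apply: modnM_congr cong2 _; rewrite modn_mod.
rewrite /dvdn -(modn_dvdm (m.+2 * _) (_ : 4 %| 16)) // cong2 modn_dvdm // cong3 (congS 2).
have : m %% 16 < 16 by rewrite ltn_mod.
by move: (m %% 16); do 16! case=> //.
Qed.

Lemma mul6_bin3 n : 'C(n, 3) * 6 = n * (n - 1) * (n - 2).
Proof.
by rewrite -[6]/(3`!) bin_ffact !ffactnS ffactn0 muln1 mulnA -!subn1 -subnDA.
Qed.

Definition arcs (T : finType) (r : rel T) : nat := #|[set p : T * T | r p.1 p.2]|.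

Lemma arcsE (T : finType) (r : rel T) : arcs r = \sum_(p : T * T) r p.1 p.2.
Proof.
rewrite /arcs -sum1_card big_mkcond /=; apply: eq_bigr => p _.
by rewrite inE; case: (r _ _).
Qed.

Lemma arcs_pairE (T : finType) (r : rel T) : arcs r = \sum_x \sum_y r x y.
Proof. by rewrite arcsE pair_big. Qed.

(* The swap (x, y) |-> (y, x) is a fixed-point-free involution on the arcs. *)
Lemma arcs_even (T : finType) (r : rel T) :
  irreflexive r -> symmetric r -> ~~ odd (arcs r).
Proof.
move=> irr sym; set A := [set p : T * T | r p.1 p.2].
set L := [set p : T * T | enum_rank p.1 < enum_rank p.2].
pose flip (p : T * T) := (p.2, p.1).
have flip_inj : injective flip by move=> [? ?] [? ?] [-> ->].
have AL : A :\: L = flip @: (A :&: L).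
  apply/setP => -[x y]; rewrite !inE /=; apply/andP/imsetP => [[yx rxy]|[[u v]]].
  - exists (y, x) => //; rewrite !inE /= sym rxy ltn_neqAle leqNgt yx andbT.
    by apply: contraTneq rxy => /val_inj/enum_rank_inj ->; rewrite irr.
  - by rewrite !inE /= => /andP[ruv uv] [-> ->]; rewrite -sym ruv -leqNgt ltnW.
by rewrite /arcs -/A -(cardsID L A) AL card_imset // addnn odd_double.
Qed.

Definition induced_arcs (T : finType) (r : rel T) (S : {set T}) : nat :=
  arcs [rel x y | [&& x \in S, y \in S & r x y]].

Lemma card_3sets_containing (T : finType) (x y : T) : x != y ->
  #|[set S : {set T} | [&& #|S| == 3, x \in S & y \in S]]| = #|T| - 2.
Proof.
move=> xy.
have -> : [set S : {set T} | [&& #|S| == 3, x \in S & y \in S]] =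
          (fun z => [set x; y; z]) @: ~: [set x; y].
  apply/setP => S; rewrite inE; apply/and3P/imsetP => [[/eqP S3 xS yS]|[z]].
  - have xyS : [set x; y] \subset S by rewrite subUset !sub1set xS.
    have /cards1P[z Sz] : #|S :\: [set x; y]| == 1.
      by rewrite cardsDS // S3 cards2 xy.
    have zSD : z \in S :\: [set x; y] by rewrite Sz set11.
    exists z; first by move: zSD; rewrite !inE => /andP[].
    by rewrite -(setID S [set x; y]) (setIidPr xyS) Sz.
  - rewrite !inE negb_or => /andP[zx zy] ->.
    rewrite !inE !eqxx orbT; split=> //.
    by rewrite setUC cardsU1 cards2 !inE negb_or zx zy xy.
rewrite card_in_imset; first by rewrite cardsCs setCK cards2 xy.
move=> z1 z2; rewrite !inE !negb_or => /andP[z1x z1y] _ Ez.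
have : z1 \in [set x; y; z2] by rewrite -Ez !inE eqxx !orbT.
by rewrite !inE (negbTE z1x) (negbTE z1y) => /eqP.
Qed.

Lemma sum_induced_arcs_3sets (T : finType) (r : rel T) : irreflexive r ->
  \sum_(S : {set T} | #|S| == 3) induced_arcs r S = arcs r * (#|T| - 2).
Proof.
move=> irr; rewrite arcsE big_distrl /=.
under eq_bigr do rewrite /induced_arcs arcsE.
rewrite exchange_big /=; apply: eq_bigr => -[x y] _ /=.
have [rxy|_] := boolP (r x y); last by rewrite big1 // => S _; rewrite !andbF.
have xy : x != y by apply: contraTneq rxy => ->; rewrite irr.
rewrite mul1n -(card_3sets_containing xy) -sum1_card big_mkcond [RHS]big_mkcond /=.
by apply: eq_bigr => S _; rewrite inE andbT; case: (#|S| == 3).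
Qed.

Definition inducing n k (e : rel 'I_n) (h : rel 'I_k) : {set {set 'I_n}} :=
  [set S : {set 'I_n} | (#|S| == k) && induced_iso e h S].

Lemma induced_arcs_iso n k (e : rel 'I_n) (h : rel 'I_k) S :
  induced_iso e h S -> induced_arcs e S = arcs h.
Proof.
case/existsP=> f /and3P[/injectiveP f_inj /eqP fS /forallP fe].
have f2_inj : injective (fun p : 'I_k * 'I_k => (f p.1, f p.2)).
  by move=> [i j] [i' j'] /= [/f_inj -> /f_inj ->].
rewrite /induced_arcs /arcs -(card_imset _ f2_inj); apply: eq_card => -[x y].
rewrite !inE /=; apply/and3P/imsetP => [[]|[[i j]]].
- rewrite -fS => /imsetP[i _ ->] /imsetP[j _ ->] eij.
  by exists (i, j); rewrite // inE -(eqP (forallP (fe i) j)).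
- rewrite inE /= => hij [-> ->].
  by rewrite -fS !imset_f ?inE // (eqP (forallP (fe i) j)).
Qed.

Lemma card_inducing_density n k (e : rel 'I_n) (h : rel 'I_k) c d :
  k <= n -> 0 < d -> density h e = (c%:R / d%:R)%R ->
  d * #|inducing e h| = c * 'C(n, k).
Proof.
move=> kn d_gt0 /eqP; rewrite /density eqr_div ?pnatr_eq0 -?lt0n ?bin_gt0 //.
by rewrite -!natrM eqr_nat mulnC => /eqP.
Qed.

(* Classes with distinct arc counts are disjoint, so total size 'C(n, k)
   forces them to partition the k-subsets. *)
Lemma sum_induced_arcs_inducing n k (e : rel 'I_n) (I : finType) (H : I -> rel 'I_k) :
  injective (fun i => arcs (H i)) ->
  \sum_i #|inducing e (H i)| = 'C(n, k) ->
  \sum_(S : {set 'I_n} | #|S| == k) induced_arcs e S =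
    \sum_i #|inducing e (H i)| * arcs (H i).
Proof.
move=> arcs_inj sum_cards.
have disj i j : i != j -> [disjoint inducing e (H i) & inducing e (H j)].
  move=> ij; rewrite -setI_eq0; apply/eqP/setP => S; rewrite !inE.
  apply/negbTE/negP => /andP[/andP[_ /induced_arcs_iso Si] /andP[_ /induced_arcs_iso Sj]].
  by move: ij; rewrite (arcs_inj i j) ?eqxx //= -Si -Sj.
have cover : \bigcup_i inducing e (H i) = [set S : {set 'I_n} | #|S| == k].
  apply/eqP; rewrite eqEcard; apply/andP; split.
    by apply/bigcupsP => i _; apply/subsetP => S; rewrite !inE => /andP[].
  rewrite card_draws card_ord -sum_cards -sum1_card partition_disjoint_bigcup //.
  by apply/eq_leq/eq_bigr => i _; rewrite -sum1_card.
rewrite -big_set -cover partition_disjoint_bigcup //; apply: eq_bigr => i _.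
by rewrite -sum_nat_const; apply: eq_bigr => S; rewrite inE => /andP[_ /induced_arcs_iso].
Qed.

Definition graph3 (i : 'I_4) : rel 'I_3 := nth coK3 [:: K3; P3; K2K1; coK3] i.

Lemma arcs_graph3 : [/\ arcs K3 = 6, arcs P3 = 4, arcs K2K1 = 2 & arcs coK3 = 0].
Proof. by split; rewrite arcs_pairE !big_ord_recr !big_ord0. Qed.

Lemma arcs_graph3_inj : injective (fun i => arcs (graph3 i)).
Proof.
have [aK3 aP3 aK2K1 acoK3] := arcs_graph3.
move=> i j; rewrite /graph3; case: i j => [[|[|[|[|i]]]] ?] [[|[|[|[|j]]]] ?] //=;
  by rewrite ?aK3 ?aP3 ?aK2K1 ?acoK3 // => _; apply: val_inj.
Qed.

Lemma three_symmetric_card_inducing n (e : rel 'I_n) : 3 <= n -> three_symmetric e ->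
  [/\ 8 * #|inducing e K3| = 'C(n, 3), 8 * #|inducing e P3| = 3 * 'C(n, 3),
      8 * #|inducing e K2K1| = 3 * 'C(n, 3) & 8 * #|inducing e coK3| = 'C(n, 3)].
Proof.
move=> n3 [dK3 dP3 dK2K1 dcoK3].
by split; [rewrite -[RHS]mul1n| | |rewrite -[RHS]mul1n]; exact: card_inducing_density.
Qed.

Lemma three_symmetric_sum_induced_arcs n (e : rel 'I_n) : 3 <= n -> three_symmetric e ->
  \sum_(S : {set 'I_n} | #|S| == 3) induced_arcs e S = 3 * 'C(n, 3).
Proof.
move=> n3 ts; have [aK3 aP3 aK2K1 acoK3] := arcs_graph3.
have [cK3 cP3 cK2K1 ccoK3] := three_symmetric_card_inducing n3 ts.
rewrite (sum_induced_arcs_inducing arcs_graph3_inj).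
all: rewrite !big_ord_recr big_ord0 /graph3 /= ?aK3 ?aP3 ?aK2K1 ?acoK3.
(* The two cardinality terms differ in hidden instances, which lia would read
   as distinct atoms; [set] identifies them. *)
all: set c1 := #|inducing e K3|; set c2 := #|inducing e P3|.
all: set c3 := #|inducing e K2K1|; set c4 := #|inducing e coK3|.
all: lia.
Qed.

Lemma three_symmetric_arcs n (e : rel 'I_n) : 3 <= n -> irreflexive e -> three_symmetric e ->
  (arcs e).*2 = n * (n - 1).
Proof.
move=> n3 irr ts.
have := sum_induced_arcs_3sets irr.
rewrite three_symmetric_sum_induced_arcs // card_ord => arcs_e.
have : (arcs e).*2 * (n - 2) = n * (n - 1) * (n - 2) by rewrite -mul6_bin3; lia.
by move/eqP; rewrite eqn_pmul2r ?subn_gt0 // => /eqP.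
Qed.

Theorem mainTheorem6 (n : nat) (e : rel 'I_n) :
  (3 <= n)%N -> simple_graph e -> three_symmetric e ->
  (n %% 16 \in [:: 0; 1; 8])%N /\ ~ (3 <= n <= 7)%N.
Proof.
move=> n3 [irr sym] ts.
have irr_e : irreflexive e := fun x => negbTE (irr x).
have arcs_e := three_symmetric_arcs n3 irr_e ts.
have [cK3 _ _ _] := three_symmetric_card_inducing n3 ts.
have dvd4 : 4 %| n * (n - 1).
  by rewrite -arcs_e -(even_halfK (arcs_even irr_e sym)) -!muln2 -mulnA dvdn_mull.
have dvd16 : 16 %| n * (n - 1) * (n - 2).
  by rewrite -mul6_bin3 -cK3 -mulnA -[16]/(8 * 2) dvdn_pmul2l // dvdn_mull.
have mod16 := mod16_of_dvd dvd4 dvd16.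
split=> // /andP[_ n7]; move: mod16; rewrite modn_small ?(leq_ltn_trans n7) // !inE.
by case/or3P=> /eqP n_eq; move: n3 n7; rewrite n_eq.
Qed.
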